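(* Let $L = L_p + \varepsilon L_d \in \mathbb{DH}[t]$ be a line polynomial and $h \in \mathbb{R}[t]$ nonzero. Suppose there is a motion polynomial $C = P + \varepsilon D \in \mathbb{DH}[t]$ satisfying $$P\mathbf{k}\overline{P} = hL_p,\qquad -P\mathbf{k}\overline{D} - D\mathbf{k}\overline{P} = hL_d,\qquad P\overline{D} + D\overline{P} = 0,$$ and suppose there is $f \in \mathbb{R}[t]$, either linear or quadratic and irreducible over $\mathbb{R}$, such that $f^2$ divides $h/\gcd(\operatorname{rgcd}(L_p), h)$. Then there exist an integer $m \ge 1$ and a motion polynomial satisfying the same three equations with $h$ replaced by $h/f^{2m}$.
   Context: $\mathbb{H}$ denotes the real quaternions with units $\mathbf{i},\mathbf{j},\mathbf{k}$ and conjugation $\overline{p_0 + p_1\mathbf{i} + p_2\mathbf{j} + p_3\mathbf{k}} = p_0 - p_1\mathbf{i} - p_2\mathbf{j} - p_3\mathbf{k}$; $\mathbb{DH} = \mathbb{H} + \varepsilon\mathbb{H}$ with $\varepsilon^2=0$, $\varepsilon$ central. $\mathbb{H}[t]$, $\mathbb{DH}[t]$ are polynomial rings in a real indeterminate $t$ commuting with the coefficients; conjugation acts coefficientwise. A motion polynomial is $C = P + \varepsilon D \in \mathbb{DH}[t]$ with $P \ne 0$ and $P\overline{D} + D\overline{P} = 0$. A line polynomial is $L = L_p + \varepsilon L_d \in \mathbb{DH}[t]$ with $L_p, L_d$ vectorial (zero scalar part), $L_p\overline{L_d} + L_d\overline{L_p} = 0$, and $L_p \neq 0$. For $A \in \mathbb{H}[t]$,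 $\operatorname{rgcd}(A)$ is the monic gcd in $\mathbb{R}[t]$ of its four real coefficient polynomials. The three equations are equivalent to $C_\varepsilon\mathbf{k}\overline{C_\varepsilon} = hL$ (with $C_\varepsilon = P - \varepsilon D$) together with the Study condition. *)

From HB Require Import structures.
From mathcomp Require Import all_boot all_order all_algebra.
From mathcomp Require Import reals.
Set Implicit Arguments. Unset Strict Implicit. Unset Printing Implicit Defensive.
Import Order.TTheory GRing.Theory Num.Theory.
Local Open Scope ring_scope.

(* H[t] (t real, commuting with coefficients) is identified with
   quat {poly R}: a quaternion polynomial is a quaternion whose four real
   coordinates are real polynomials. *)
Record quat (A : Type) := Quat { q0 : A; q1 : A; q2 : A; q3 : A }.

Section QuatOps.
Variable A : comRingType.
Definition qzero : quat A := Quat 0 0 0 0.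
Definition qk : quat A := Quat 0 0 0 1.
Definition qadd (p q : quat A) : quat A :=
  Quat (q0 p + q0 q) (q1 p + q1 q) (q2 p + q2 q) (q3 p + q3 q).
Definition qopp (p : quat A) : quat A :=
  Quat (- q0 p) (- q1 p) (- q2 p) (- q3 p).
Definition qmul (p q : quat A) : quat A :=
  Quat (q0 p * q0 q - q1 p * q1 q - q2 p * q2 q - q3 p * q3 q)
       (q0 p * q1 q + q1 p * q0 q + q2 p * q3 q - q3 p * q2 q)
       (q0 p * q2 q - q1 p * q3 q + q2 p * q0 q + q3 p * q1 q)
       (q0 p * q3 q + q1 p * q2 q - q2 p * q1 q + q3 p * q0 q).
Definition qconj (p : quat A) : quat A :=
  Quat (q0 p) (- q1 p) (- q2 p) (- q3 p).
Definition qscale (c : A) (p : quat A) : quat A :=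
  Quat (c * q0 p) (c * q1 p) (c * q2 p) (c * q3 p).
Definition qvectorial (p : quat A) : Prop := q0 p = 0.
End QuatOps.

Section PolyQuat.
Variable R : realType.
(* monic gcd in R[t] (0 if both are 0) *)
Definition mgcd (a b : {poly R}) : {poly R} :=
  let g := gcdp a b in (lead_coef g)^-1 *: g.
Definition rgcd (p : quat {poly R}) : {poly R} :=
  mgcd (mgcd (mgcd (q0 p) (q1 p)) (q2 p)) (q3 p).

Definition study_cond (P D : quat {poly R}) : Prop :=
  qadd (qmul P (qconj D)) (qmul D (qconj P)) = qzero _.

Definition motion_poly (P D : quat {poly R}) : Prop :=
  P <> qzero _ /\ study_cond P D.

Definition line_poly (Lp Ld : quat {poly R}) : Prop :=
  [/\ qvectorial Lp, qvectorial Ld,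
      qadd (qmul Lp (qconj Ld)) (qmul Ld (qconj Lp)) = qzero _
    & Lp <> qzero _].

Definition three_eqs (P D Lp Ld : quat {poly R}) (h : {poly R}) : Prop :=
  [/\ qmul (qmul P (qk _)) (qconj P) = qscale h Lp,
      qadd (qopp (qmul (qmul P (qk _)) (qconj D)))
           (qopp (qmul (qmul D (qk _)) (qconj P))) = qscale h Ld
    & study_cond P D].
End PolyQuat.

(* Let g be the monic real polynomial associated with f, so g = X - r or
   g = (X - Re z)^2 + (Im z)^2 for a non-real root z of f, and write
   P = g^j P2 with g not dividing P2.  The hypothesis on f says that the
   g-adic valuation of h exceeds that of Lp by 2; comparing valuations in
   P k conj P = h Lp gives g^(j+1) | h, hence P2(z) and D(z) are isotropic:
   both the Study form and the k-form of (P2(z), D(z)) vanish.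

   The three equations are invariant under the shear D -> D + rho P2 k, get
   multiplied by c^2 when P and D are scaled by c, and by the norm u0^2 + u3^2
   when P and D are multiplied on the right by u0 - u3 k, which commutes with k.
   At a real root r, isotropy forces D(r) = lambda P2(r) k; after the shear by
   -lambda, P and D are divisible by g and dividing by g divides h by g^2.  At
   a non-real root z, P2(z) and D(z) live in H (x) C = M_2(C); choosing between
   z and its conjugate so that the second row of P2(z) is nonzero, a shear
   kills the first rows of P(z) and D(z), and then right multiplication by
   (X - Re z) + (Im z) k, of norm g, makes both divisible by g; this divides h
   by g, and doing it twice divides h by g^2. *)

From HB Require Import structures.
From mathcomp Require Import all_boot all_order all_algebra.
From mathcomp Require Import reals complex.
From mathcomp Require Import ring lra zify.
Set Implicit Arguments. Unset Strict Implicit. Unset Printing Implicit Defensive.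
Import Order.TTheory GRing.Theory Num.Theory.
Local Open Scope ring_scope.

(* The left-hand sides of [three_eqs]. *)
Definition qktwist (A : comNzRingType) (X : quat A) : quat A :=
  qmul (qmul X (qk A)) (qconj X).

Definition qkform (A : comNzRingType) (X Y : quat A) : quat A :=
  qadd (qopp (qmul (qmul X (qk A)) (qconj Y)))
       (qopp (qmul (qmul Y (qk A)) (qconj X))).

Definition qstudy (A : comNzRingType) (X Y : quat A) : quat A :=
  qadd (qmul X (qconj Y)) (qmul Y (qconj X)).

(* Commutes with [k]; its norm is [u0 ^+ 2 + u3 ^+ 2]. *)
Definition krot (A : comNzRingType) (u0 u3 : A) : quat A := Quat u0 0 0 (- u3).

Definition qnorm (A : comNzRingType) (X : quat A) : A :=
  q0 X ^+ 2 + q1 X ^+ 2 + q2 X ^+ 2 + q3 X ^+ 2.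

Ltac quat_unfold :=
  repeat match goal with X : quat _ |- _ => case: X => ? ? ? ? end;
  cbv beta iota zeta delta [qnorm qktwist qkform qstudy krot qmul qadd qopp
                            qconj qscale qk qzero q0 q1 q2 q3].

Ltac quat_ring := quat_unfold; congr Quat; ring.

Section QuatIdentities.
Variable A : comNzRingType.
Implicit Types (X Y p d : quat A) (c : A).

Lemma qscaleA c1 c2 X : qscale c1 (qscale c2 X) = qscale (c1 * c2) X.
Proof. quat_ring. Qed.

Lemma qscale1 X : qscale 1 X = X.
Proof. quat_ring. Qed.

Lemma qscale0 X : qscale 0 X = qzero A.
Proof. quat_ring. Qed.

Lemma qscaler0 c : qscale c (qzero A) = qzero A.
Proof. quat_ring. Qed.

Lemma qaddKN c X : qadd (qscale c X) (qscale (- c) X) = qzero A.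
Proof. quat_ring. Qed.

Lemma qaddr0 X : qadd X (qzero A) = X.
Proof. quat_ring. Qed.

Lemma qmul0r X : qmul (qzero A) X = qzero A.
Proof. quat_ring. Qed.

Lemma qmulr0 X : qmul X (qzero A) = qzero A.
Proof. quat_ring. Qed.

Lemma qktwist_scale c X : qktwist (qscale c X) = qscale (c * c) (qktwist X).
Proof. quat_ring. Qed.

Lemma qkform_scale c X Y :
  qkform (qscale c X) (qscale c Y) = qscale (c * c) (qkform X Y).
Proof. quat_ring. Qed.

Lemma qstudy_scale c X Y :
  qstudy (qscale c X) (qscale c Y) = qscale (c * c) (qstudy X Y).
Proof. quat_ring. Qed.

Lemma qkform_scalel c X Y : qkform (qscale c X) Y = qscale c (qkform X Y).
Proof. quat_ring. Qed.

Lemma qstudy_scalel c X Y : qstudy (qscale c X) Y = qscale c (qstudy X Y).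
Proof. quat_ring. Qed.

Lemma qktwist_krot (u0 u3 : A) X :
  qktwist (qmul X (krot u0 u3)) = qscale (u0 ^+ 2 + u3 ^+ 2) (qktwist X).
Proof. quat_ring. Qed.

Lemma qkform_krot (u0 u3 : A) X Y :
  qkform (qmul X (krot u0 u3)) (qmul Y (krot u0 u3)) =
  qscale (u0 ^+ 2 + u3 ^+ 2) (qkform X Y).
Proof. quat_ring. Qed.

Lemma qstudy_krot (u0 u3 : A) X Y :
  qstudy (qmul X (krot u0 u3)) (qmul Y (krot u0 u3)) =
  qscale (u0 ^+ 2 + u3 ^+ 2) (qstudy X Y).
Proof. quat_ring. Qed.

Lemma qkform_shear c rho X Y :
  qkform (qscale c X) (qadd Y (qscale rho (qmul X (qk A)))) =
  qkform (qscale c X) Y.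
Proof. quat_ring. Qed.

Lemma qstudy_shear c rho X Y :
  qstudy (qscale c X) (qadd Y (qscale rho (qmul X (qk A)))) =
  qstudy (qscale c X) Y.
Proof. quat_ring. Qed.

Lemma qktwist_norm p :
  qmul (qmul (qconj p) (qktwist p)) p = qscale (qnorm p ^+ 2) (qk A).
Proof. quat_ring. Qed.

(* [qnorm p * d = p * (conj p * d)], where the scalar, [i] and [j] parts of
   [conj p * d] are read off from the Study form and from
   [conj p * qkform p d * p]. *)
Lemma qkform_decomp p d :
  let W := qmul (qmul (qconj p) (qkform p d)) p in
  qscale (qnorm p ^+ 2 *+ 2) d =
  qadd (qscale (qnorm p * q3 (qmul (qconj p) d) *+ 2) (qmul p (qk A)))
  (qadd (qscale (qnorm p * q0 (qstudy p d)) p)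
  (qadd (qscale (q2 W) (qmul p (Quat 0 1 0 0)))
        (qscale (- q1 W) (qmul p (Quat 0 0 1 0))))).
Proof. quat_ring. Qed.

End QuatIdentities.

Lemma qscale_inj (A : idomainType) (c : A) (X Y : quat A) :
  c != 0 -> qscale c X = qscale c Y -> X = Y.
Proof.
move=> c0; case: X Y => [x0 x1 x2 x3] [y0 y1 y2 y3] [].
by move=> /(mulfI c0) -> /(mulfI c0) -> /(mulfI c0) -> /(mulfI c0) ->.
Qed.
Arguments qscale_inj {A c X Y}.

Section ThreeEquations.
Variable R : realType.
Implicit Types (P D X Lp Ld : quat {poly R}) (h c rho : {poly R}).

Lemma three_eqsE P D Lp Ld h :
  three_eqs P D Lp Ld h <->
  [/\ qktwist P = qscale h Lp, qkform P D = qscale h Ld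
    & qstudy P D = qzero _].
Proof. by []. Qed.

Lemma three_eqs_scale c P D Lp Ld h :
  three_eqs P D Lp Ld h ->
  three_eqs (qscale c P) (qscale c D) Lp Ld (c * c * h).
Proof.
rewrite !three_eqsE => -[e1 e2 e3].
by rewrite qktwist_scale qkform_scale qstudy_scale e1 e2 e3 !qscaleA qscaler0.
Qed.

Lemma three_eqs_cancel c P D Lp Ld h : c != 0 ->
  three_eqs (qscale c P) (qscale c D) Lp Ld (c * c * h) ->
  three_eqs P D Lp Ld h.
Proof.
move=> c0 /three_eqsE[e1 e2 e3]; have cc0 : c * c != 0 by rewrite mulf_neq0.
apply/three_eqsE; split; apply: (qscale_inj cc0).
- by rewrite -qktwist_scale e1 qscaleA.
- by rewrite -qkform_scale e2 qscaleA.
- by rewrite -qstudy_scale e3 qscaler0.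
Qed.

Lemma three_eqs_krot (u0 u3 : {poly R}) P D Lp Ld h :
  three_eqs P D Lp Ld h ->
  three_eqs (qmul P (krot u0 u3)) (qmul D (krot u0 u3)) Lp Ld
            ((u0 ^+ 2 + u3 ^+ 2) * h).
Proof.
rewrite !three_eqsE => -[e1 e2 e3].
by rewrite qktwist_krot qkform_krot qstudy_krot e1 e2 e3 !qscaleA qscaler0.
Qed.

Lemma three_eqs_shear rho c X D Lp Ld h :
  three_eqs (qscale c X) D Lp Ld h ->
  three_eqs (qscale c X) (qadd D (qscale rho (qmul X (qk _)))) Lp Ld h.
Proof. by rewrite !three_eqsE qkform_shear qstudy_shear. Qed.

Lemma three_eqs_neq0 P D Lp Ld h : h != 0 -> Lp <> qzero _ ->
  three_eqs P D Lp Ld h -> P <> qzero _.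
Proof.
move=> h0 Lp0 /three_eqsE[e1 _ _] P0; apply: Lp0; apply: (qscale_inj h0).
by rewrite -e1 P0 qscaler0; quat_ring.
Qed.

Lemma three_eqs_motion P D Lp Ld h :
  h != 0 -> Lp <> qzero _ -> three_eqs P D Lp Ld h -> motion_poly P D.
Proof. by move=> h0 Lp0 e; split; [exact: three_eqs_neq0 e | case: e]. Qed.

End ThreeEquations.

Definition qmap (A B : Type) (phi : A -> B) (X : quat A) : quat B :=
  Quat (phi (q0 X)) (phi (q1 X)) (phi (q2 X)) (phi (q3 X)).

Section QuatMap.
Variables (A B : comNzRingType) (phi : {rmorphism A -> B}).
Implicit Types (X Y : quat A).

Lemma qmap_add X Y : qmap phi (qadd X Y) = qadd (qmap phi X) (qmap phi Y).
Proof. by case: X Y => ? ? ? ? [? ? ? ?]; rewrite /qmap /= !rmorphD. Qed.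

Lemma qmap_mul X Y : qmap phi (qmul X Y) = qmul (qmap phi X) (qmap phi Y).
Proof.
by case: X Y => ? ? ? ? [? ? ? ?]; rewrite /qmap /= !(rmorphB, rmorphD, rmorphM).
Qed.

Lemma qmap_opp X : qmap phi (qopp X) = qopp (qmap phi X).
Proof. by case: X => ? ? ? ?; rewrite /qmap /= !rmorphN. Qed.

Lemma qmap_conj X : qmap phi (qconj X) = qconj (qmap phi X).
Proof. by case: X => ? ? ? ?; rewrite /qmap /= !rmorphN. Qed.

Lemma qmap_scale c X : qmap phi (qscale c X) = qscale (phi c) (qmap phi X).
Proof. by case: X => ? ? ? ?; rewrite /qmap /= !rmorphM. Qed.

Lemma qmap_k : qmap phi (qk A) = qk B.
Proof. by rewrite /qmap /= rmorph0 rmorph1. Qed.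

Lemma qmap_qktwist X : qmap phi (qktwist X) = qktwist (qmap phi X).
Proof. by rewrite /qktwist !qmap_mul qmap_k qmap_conj. Qed.

Lemma qmap_qkform X Y : qmap phi (qkform X Y) = qkform (qmap phi X) (qmap phi Y).
Proof. by rewrite /qkform qmap_add !qmap_opp !qmap_mul qmap_k !qmap_conj. Qed.

Lemma qmap_qstudy X Y : qmap phi (qstudy X Y) = qstudy (qmap phi X) (qmap phi Y).
Proof. by rewrite /qstudy qmap_add !qmap_mul !qmap_conj. Qed.

End QuatMap.

Definition qcoords (A : Type) (X : quat A) : seq A := [:: q0 X; q1 X; q2 X; q3 X].

Definition qdvdp (R : fieldType) (g : {poly R}) (X : quat {poly R}) : bool :=
  all (dvdp g) (qcoords X).

Definition excess (R : fieldType) (k : nat) (g : {poly R})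
    (Lp : quat {poly R}) (h : {poly R}) : Prop :=
  forall n, qdvdp (g ^+ n) Lp -> g ^+ (n + k) %| h.

Section QuatDivisibility.
Variable R : fieldType.
Implicit Types (g p : {poly R}) (X Lp : quat {poly R}).

Lemma qdvdp_scale g c X : g %| c -> qdvdp g (qscale c X).
Proof. by move=> gc; case: X => *; rewrite /qdvdp /= !dvdp_mulr. Qed.

Lemma qdvdpP g X : qdvdp g X -> exists Y, X = qscale g Y.
Proof.
case: X => x0 x1 x2 x3 /and5P[/= d0 d1 d2 d3 _].
exists (Quat (x0 %/ g) (x1 %/ g) (x2 %/ g) (x3 %/ g)).
by rewrite /qscale /= ![g * _]mulrC !divpK.
Qed.

Lemma qdvdp_trans d g X : d %| g -> qdvdp g X -> qdvdp d X.
Proof. by move=> dg /allP gX; apply/allP => y /gX; apply: dvdp_trans. Qed.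

Lemma qcoords_neq0 (A : comNzRingType) (X : quat A) :
  X <> qzero A -> exists2 x, x \in qcoords X & x != 0.
Proof.
case: X => x0 x1 x2 x3 X0; apply/hasP; apply: contra_notT X0.
by rewrite -all_predC => /and5P[/= /negPn/eqP-> /negPn/eqP-> /negPn/eqP-> /negPn/eqP->].
Qed.

Lemma dvdp_exp_size g p n : (1 < size g)%N -> p != 0 -> g ^+ n %| p ->
  (n < size p)%N.
Proof.
move=> sg p0 /(dvdp_leq p0); apply: leq_trans.
have g0 : g != 0 by rewrite -size_poly_gt0 ltnW.
have gn0 : (0 < size (g ^+ n))%N by rewrite size_poly_gt0 expf_neq0.
by rewrite -(prednK gn0) ltnS size_exp leq_pmull // -subn1 subn_gt0.
Qed.

Lemma quat_pow_factor g X : (1 < size g)%N -> X <> qzero _ ->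
  exists n Y, X = qscale (g ^+ n) Y /\ ~~ qdvdp g Y.
Proof.
move=> sg /qcoords_neq0[x xX x0].
have bounded n : qdvdp (g ^+ n) X -> (n <= size x)%N.
  by move=> /allP/(_ x xX)/(dvdp_exp_size sg x0)/ltnW.
case: (ex_maxnP (ex_intro _ 0%N (_ : qdvdp (g ^+ 0) X)) bounded).
  by rewrite expr0 /qdvdp; apply/allP => y _; exact: dvd1p.
move=> n /qdvdpP[Y ->] maxn; exists n, Y; split => //; apply/negP.
move=> /qdvdpP[Z eY]; suff: (n.+1 <= n)%N by rewrite ltnn.
by apply: maxn; rewrite eY qscaleA -exprSr; apply: qdvdp_scale.
Qed.

Lemma excess_le k l g Lp h : (k <= l)%N -> excess l g Lp h -> excess k g Lp h.
Proof.
by move=> kl ex n /ex; apply: dvdp_trans; apply: dvdp_exp2l; rewrite leq_add2l.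
Qed.

Lemma excess_mull k g Lp h : g != 0 -> excess k.+1 g Lp (g * h) -> excess k g Lp h.
Proof. by move=> g0 ex n /ex; rewrite addnS exprS dvdp_mul2l. Qed.

End QuatDivisibility.

Section EvaluationKernel.
Variables (R : fieldType) (B : idomainType) (phi : {rmorphism {poly R} -> B}).
Variable g : {poly R}.
Hypothesis g_neq0 : g != 0.
Hypothesis phi_ker : forall p, (phi p == 0) = (g %| p).
Implicit Types (a b h : {poly R}) (X Lp : quat {poly R}).

Lemma dvdp_mul_prime a b : (g %| a * b) = (g %| a) || (g %| b).
Proof. by rewrite -!phi_ker rmorphM mulf_eq0. Qed.

Lemma dvdp_exp_mul_ndvd n a b : ~~ (g %| a) -> g ^+ n %| a * b -> g ^+ n %| b.
Proof.
move=> ga; elim: n b => [|n IH] b gab; first by rewrite expr0 dvd1p.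
have gb : g %| b.
  have : g %| a * b by apply: dvdp_trans gab; rewrite exprS dvdp_mulr.
  by rewrite dvdp_mul_prime (negbTE ga).
move: gab; rewrite -(divpK gb) mulrA !exprSr !dvdp_mul2r //; exact: IH.
Qed.

Lemma qmap_eq0 X : qmap phi X = qzero B <-> qdvdp g X.
Proof.
case: X => x0 x1 x2 x3; rewrite /qmap /qdvdp /= -!phi_ker andbT; split.
  by case=> -> -> -> ->; rewrite eqxx.
by case/and4P => /eqP-> /eqP-> /eqP-> /eqP->.
Qed.

Lemma excess_dvdp j Lp h : excess 1 g Lp h ->
  qdvdp (g ^+ (j + j)) (qscale h Lp) -> g ^+ j.+1 %| h.
Proof.
move=> ex hLp; suff: forall k, (k <= j)%N -> g ^+ k.+1 %| h by apply.
elim=> [_|k IH lekj].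
  by rewrite -(add0n 1%N); apply: ex; rewrite expr0; apply/allP => x _; exact: dvd1p.
have /divpK eh := IH (ltnW lekj); set h' := h %/ _ in eh.
have [gh'|ngh'] := boolP (g %| h').
  by rewrite -eh exprSr mulrC dvdp_mul.
have key x : g ^+ (j + j) %| h * x -> g ^+ k.+1 %| x.
  have le : (k.+1 <= j + j)%N by lia.
  rewrite -eh [h' * _]mulrC -mulrA -(subnKC le) exprD dvdp_mul2l ?expf_neq0 //.
  by move=> /(dvdp_exp_mul_ndvd ngh'); apply: dvdp_trans; apply: dvdp_exp2l; lia.
rewrite -addn1; apply: ex; case: Lp hLp => ? ? ? ?.
by rewrite /qdvdp /= => /and5P[/key-> /key-> /key-> /key->].
Qed.

End EvaluationKernel.

Section Isotropy.
Variables (R : realType) (B : idomainType) (phi : {rmorphism {poly R} -> B}).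
Variable g : {poly R}.
Hypothesis g_neq0 : g != 0.
Hypothesis phi_ker : forall p, (phi p == 0) = (g %| p).
Implicit Types (P D Lp Ld : quat {poly R}) (h : {poly R}).

Lemma qmap_qktwist_eq0 P D Lp Ld h :
  three_eqs P D Lp Ld h -> g %| h -> qktwist (qmap phi P) = qzero B.
Proof.
move=> /three_eqsE[e1 _ _] gh; rewrite -qmap_qktwist e1.
exact/(qmap_eq0 phi_ker)/qdvdp_scale.
Qed.

Lemma qmap_isotropic j P2 D Lp Ld h :
  three_eqs (qscale (g ^+ j) P2) D Lp Ld h -> excess 1 g Lp h ->
  [/\ g ^+ j.+1 %| h, qstudy (qmap phi P2) (qmap phi D) = qzero B
    & qkform (qmap phi P2) (qmap phi D) = qzero B].
Proof.
move=> /three_eqsE[e1 e2 e3] ex; have gj0 : g ^+ j != 0 by rewrite expf_neq0.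
have gjh : g ^+ j.+1 %| h.
  apply: (excess_dvdp g_neq0 phi_ker ex); rewrite -e1 qktwist_scale -exprD.
  exact/qdvdp_scale/dvdpp.
split=> //; rewrite -?qmap_qstudy -?qmap_qkform; apply/(qmap_eq0 phi_ker).
- move: e3; rewrite qstudy_scalel -(qscaler0 (g ^+ j)) => /(qscale_inj gj0) ->.
  by rewrite -(qscale0 (qzero _)); apply/qdvdp_scale/dvdp0.
- have -> : qkform P2 D = qscale (g * (h %/ g ^+ j.+1)) Ld.
    apply: (qscale_inj gj0); rewrite -qkform_scalel e2 qscaleA.
    by rewrite -{1}(divpK gjh) exprS; congr qscale; ring.
  exact/qdvdp_scale/dvdp_mulr/dvdpp.
Qed.

End Isotropy.

Section RealQuaternions.
Variable R : realFieldType.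
Implicit Types (p d : quat R).

Lemma qnorm_eq0 p : qnorm p = 0 -> p = qzero R.
Proof. by case: p => a b c e; rewrite /qnorm /qzero /= => n0; congr Quat; nra. Qed.

Lemma qktwist_eq0_real p : qktwist p = qzero R -> p = qzero R.
Proof.
move=> t0; apply: qnorm_eq0; apply/eqP; rewrite -sqrf_eq0.
by have /(congr1 (@q3 _)) := qktwist_norm p; rewrite t0 qmulr0 qmul0r /= mulr1 => <-.
Qed.

Lemma isotropic_real p d : p <> qzero R ->
  qstudy p d = qzero R -> qkform p d = qzero R ->
  exists lambda, d = qscale lambda (qmul p (qk R)).
Proof.
move=> p0 S0 K0; have n0 : qnorm p != 0 by apply/eqP => /qnorm_eq0.
have := qkform_decomp p d; rewrite S0 K0 qmulr0 qmul0r /= oppr0 mulr0.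
rewrite !qscale0 !qaddr0 => e; exists (q3 (qmul (qconj p) d) / qnorm p).
apply: (qscale_inj (_ : qnorm p ^+ 2 *+ 2 != 0)).
  by rewrite mulrn_eq0 /= expf_neq0.
by rewrite e qscaleA /=; congr qscale; field.
Qed.

End RealQuaternions.

Section LinearFactor.
Variable R : realType.
Implicit Types (P D Lp Ld : quat {poly R}) (h : {poly R}).

Lemma linear_step (r : R) P D Lp Ld h : h != 0 -> Lp <> qzero _ ->
  three_eqs P D Lp Ld h -> excess 2 ('X - r%:P) Lp h ->
  exists P' D' h', h = ('X - r%:P) ^+ 2 * h' /\ three_eqs P' D' Lp Ld h'.
Proof.
set g := 'X - r%:P => h0 Lp0 e ex.
have g0 : g != 0 by rewrite polyXsubC_eq0.
have ker p : (horner_eval r p == 0) = (g %| p) by rewrite dvdp_XsubCl.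
have sg : (1 < size g)%N by rewrite size_XsubC.
have [j [P2 [eP nP2]]] := quat_pow_factor sg (three_eqs_neq0 h0 Lp0 e).
rewrite {}eP in e; have [gjh S0 K0] := qmap_isotropic g0 ker e (excess_le (leqnSn 1) ex).
have p0 : qmap (horner_eval r) P2 <> qzero _ by move/(qmap_eq0 ker); apply/negP.
have j0 : (0 < j)%N.
  case: j e gjh => // e gjh; case: p0; apply: qktwist_eq0_real.
  by move: e; rewrite expr0 qscale1 => /(qmap_qktwist_eq0 ker); apply.
have [lambda dE] := isotropic_real p0 S0 K0.
have [D' eD'] : exists D', qadd D (qscale (- lambda%:P) (qmul P2 (qk _))) = qscale g D'.
  apply/qdvdpP/(qmap_eq0 ker); rewrite qmap_add qmap_scale qmap_mul qmap_k dE rmorphN.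
  by rewrite -[X in - X]/(lambda%:P.[r]) hornerC qaddKN.
exists (qscale (g ^+ j.-1) P2), D', (h %/ g ^+ 2); split.
  by rewrite mulrC divpK //; apply: dvdp_trans gjh; apply: dvdp_exp2l.
apply: (three_eqs_cancel g0).
rewrite qscaleA -exprS prednK // -eD' -expr2 mulrC divpK.
  exact: three_eqs_shear.
by apply: dvdp_trans gjh; apply: dvdp_exp2l.
Qed.

End LinearFactor.

Section ComplexQuaternions.
Variable R : rcfType.
Local Notation C := R[i].
Implicit Types (x p d : quat C) (c : C).

(* Right multiplication by [k] scales [qE _ x] by [i] and [qF _ x] by [-i]:
   they are the two rows of [x] seen in [H (x) C = M_2(C)]. *)
Definition qE (b : bool) x : C := if b then q0 x + 'i%C * q3 x else q2 x + 'i%C * q1 x.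
Definition qF (b : bool) x : C := if b then q0 x - 'i%C * q3 x else q2 x - 'i%C * q1 x.

Ltac complex_ring :=
  cbv beta iota delta [qE qF]; quat_unfold; try congr Quat; ring: (sqr_i R).

Lemma neq0_i : ('i%C : C) != 0.
Proof. by rewrite eq_complex /= oner_eq0 andbF. Qed.

Lemma double_eq0 c : c *+ 2 = 0 -> c = 0.
Proof. by move/eqP; rewrite mulrn_eq0 => /eqP. Qed.

Lemma qE0 b : qE b (qzero C) = 0.
Proof. by case: b; rewrite /qE /= mulr0 addr0. Qed.

Lemma qF0 b : qF b (qzero C) = 0.
Proof. by case: b; rewrite /qF /= mulr0 subr0. Qed.

Lemma qE_shear b c p d :
  qE b (qadd d (qscale c (qmul p (qk C)))) = qE b d + 'i%C * c * qE b p.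
Proof. case: b; complex_ring. Qed.

Lemma qmul_qE c x : qmul x (Quat ('i%C * c) 0 0 c) =
  qscale c (Quat ('i%C * qE true x) (qE false x) ('i%C * qE false x) (qE true x)).
Proof. complex_ring. Qed.

Lemma qmul_qE0 c x :
  (forall b, qE b x = 0) -> qmul x (Quat ('i%C * c) 0 0 c) = qzero C.
Proof. by move=> E0; rewrite qmul_qE !E0 mulr0; complex_ring. Qed.

Lemma qF_conj b x : qF b (qmap conjc x) = (qE b x)^*%C.
Proof.
by case: b; case: x => [[? ?] [? ?] [? ?] [? ?]]; rewrite /qE /qF /qmap /=;
  simpc; congr Complex; ring.
Qed.

Lemma quat_EF_eq0 x :
  (forall b, qE b x = 0) -> (forall b, qF b x = 0) -> x = qzero C.
Proof.
move=> E0 F0; have two0 : (2 : C) != 0 by rewrite pnatr_eq0.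
apply: (qscale_inj two0).
have -> : qscale 2 x = Quat (qE true x + qF true x) (- 'i%C * (qE false x - qF false x))
    (qE false x + qF false x) (- 'i%C * (qE true x - qF true x)).
  by clear E0 F0; complex_ring.
by rewrite !E0 !F0 subrr !addr0 mulr0; complex_ring.
Qed.

Lemma quat_EF_neq0 x : x <> qzero C ->
  (exists b, qE b x != 0) \/ (exists b, qF b x != 0).
Proof.
move=> x0; have [E1|] := eqVneq (qE true x) 0; last by left; exists true.
have [E2|] := eqVneq (qE false x) 0; last by left; exists false.
have [F1|] := eqVneq (qF true x) 0; last by right; exists true.
have [F2|] := eqVneq (qF false x) 0; last by right; exists false.
by case: x0; apply: quat_EF_eq0; case.
Qed.

Lemma qktwist_EF x :
  [/\ qE true (qktwist x) = 'i%C * (qE true x * qF true x - qE false x * qF false x),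
      qE false (qktwist x) = 'i%C * (qF true x * qE false x) *+ 2
    & qF false (qktwist x) = - ('i%C * (qE true x * qF false x)) *+ 2].
Proof. split; complex_ring. Qed.

Lemma qktwist_EF0 x : qktwist x = qzero C ->
  (forall b, qE b x = 0) \/ (forall b, qF b x = 0).
Proof.
move=> t0; have [] := qktwist_EF x; rewrite t0 !qE0 qF0.
move=> /esym/eqP; rewrite mulf_eq0 (negbTE neq0_i) subr_eq0 => /eqP e11.
move=> /esym/double_eq0/eqP; rewrite mulf_eq0 (negbTE neq0_i) mulf_eq0 => f1e2.
rewrite mulNrn => /esym/eqP; rewrite oppr_eq0 => /eqP/double_eq0/eqP.
rewrite mulf_eq0 (negbTE neq0_i) mulf_eq0 => e1f2.
have [E1|E1] := eqVneq (qE true x) 0.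
  have [E2|E2] := eqVneq (qE false x) 0; first by left; case.
  move: e11; rewrite E1 mul0r => /esym/eqP; rewrite mulf_eq0 (negbTE E2) orFb => /eqP F2.
  move: f1e2; rewrite (negbTE E2) orbF => /eqP F1.
  by right; case.
move: e1f2; rewrite (negbTE E1) orFb => /eqP F2.
move: e11; rewrite F2 mulr0 => /eqP; rewrite mulf_eq0 (negbTE E1) orFb => /eqP F1.
by right; case.
Qed.

Lemma qEF_polar p d :
  let T a b := qE a d * qF b p + qE a p * qF b d in
  let S := qstudy p d in let K := qkform p d in
  [/\ T true true *+ 2 = qE true S + 'i%C * qE true K,
      T false false *+ 2 = qE true S - 'i%C * qE true K,
      T false true *+ 2 = 'i%C * qE false K
    & T true false *+ 2 = - 'i%C * qF false K].
Proof. split; complex_ring. Qed.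

Lemma qE_isotropic p d : qstudy p d = qzero C -> qkform p d = qzero C ->
  forall a b, qE a d * qF b p + qE a p * qF b d = 0.
Proof.
move=> S0 K0 a b; apply: double_eq0; have := qEF_polar p d; cbv zeta.
rewrite S0 K0 !qE0 qF0 !mulr0 addr0 subr0.
by case: a; case: b; case.
Qed.

Lemma qE_proportional p d b : qstudy p d = qzero C -> qkform p d = qzero C ->
  qF b p != 0 -> exists c, forall a, qE a d + c * qE a p = 0.
Proof.
move=> S0 K0 Fp; exists (qF b d / qF b p) => a.
by apply: (mulIf Fp); rewrite mul0r -(qE_isotropic S0 K0 a b); field.
Qed.

End ComplexQuaternions.

Fact cev_comm (R : rcfType) (z : R[i]) : commr_rmorph (real_complex R) z.
Proof. by move=> a; exact: mulrC. Qed.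

Notation cev z := (horner_morph (cev_comm z)).

Definition normsq_XsubC (R : rcfType) (z : R[i]) : {poly R} :=
  ('X - (complex.Re z)%:P) ^+ 2 + (complex.Im z)%:P ^+ 2.

Section ComplexEvaluation.
Variable R : rcfType.
Variable z : R[i].
Local Open Scope complex_scope.
Implicit Types (p : {poly R}) (w : R[i]).

Lemma cev_conj p : cev z^* p = (cev z p)^*.
Proof.
rewrite /horner_morph -[in RHS]horner_map /= -map_poly_comp.
by congr (_.[_]); apply: eq_map_poly => a /=; rewrite oppr0.
Qed.

Lemma qmap_cev_conj X : qmap (cev z^*) X = qmap conjc (qmap (cev z) X).
Proof. by rewrite /qmap !cev_conj. Qed.

Lemma normsq_XsubC_conj : normsq_XsubC z^* = normsq_XsubC z.
Proof. by case: z => a b; rewrite /normsq_XsubC /= polyCN sqrrN. Qed.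

Lemma size_normsq_XsubC : size (normsq_XsubC z) = 3.
Proof.
rewrite /normsq_XsubC size_polyDl size_exp_XsubC //.
by rewrite -polyC_exp (leq_ltn_trans (size_polyC_leq1 _)).
Qed.

Lemma normsq_XsubC_neq0 : normsq_XsubC z != 0.
Proof. by rewrite -size_poly_gt0 size_normsq_XsubC. Qed.

Lemma normsq_XsubC_map :
  map_poly (real_complex R) (normsq_XsubC z) = ('X - z%:P) * ('X - z^*%:P).
Proof.
rewrite /normsq_XsubC raddfD /= !rmorphXn /= map_polyXsubC map_polyC /=.
case: z => a b; rewrite [complex.Re _]/= [complex.Im _]/=.
have -> : ((a +i* b)^*)%:P = (a%:C - 'i * b%:C)%:P by congr polyC; simpc.
have -> : a +i* b = a%:C + 'i * b%:C by simpc.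
have i2 : ('i%:P) ^+ 2 = -1 :> {poly R[i]} by rewrite -polyC_exp sqr_i polyCN.
by rewrite !polyCD !polyCN !polyCM; ring: i2.
Qed.

Lemma cev_normsq_XsubC : cev z (normsq_XsubC z) = 0.
Proof. by rewrite /horner_morph normsq_XsubC_map hornerM hornerXsubC subrr mul0r. Qed.

Lemma cev_krot :
  qmap (cev z) (krot ('X - (complex.Re z)%:P) (- (complex.Im z)%:P)) =
  Quat ('i * (complex.Im z)%:C) 0 0 (complex.Im z)%:C.
Proof.
rewrite /qmap /krot /= opprK /horner_morph map_polyXsubC map_poly0 !map_polyC.
by rewrite hornerXsubC !hornerC /=; case: z => a b /=; congr Quat; simpc.
Qed.

Hypothesis Im_neq0 : complex.Im z != 0.

Lemma cev_eq0 p : (cev z p == 0) = (normsq_XsubC z %| p).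
Proof.
apply/idP/idP => [/eqP pz|/dvdpP[q ->]]; last first.
  by rewrite rmorphM /= cev_normsq_XsubC mulr0.
rewrite -(dvdp_map (real_complex R)) normsq_XsubC_map Gauss_dvdp.
  move: pz (cev_conj p); rewrite /horner_morph => pz; rewrite pz conjc0 => pz'.
  by rewrite !dvdp_XsubCl !rootE pz pz' eqxx.
apply: coprimep_XsubC2; case: z Im_neq0 => a b /= b0; simpc.
by rewrite eq_complex /= eqxx -opprD oppr_eq0 -mulr2n mulrn_eq0.
Qed.

Lemma cev_surj w : exists rho, cev z rho = w.
Proof.
exists ((complex.Im w / complex.Im z)%:P * 'X +
        (complex.Re w - complex.Im w / complex.Im z * complex.Re z)%:P).
rewrite rmorphD rmorphM /= !horner_morphC horner_morphX.
case: z w Im_neq0 => a b [c e] /= b0; simpc; congr Complex; field; exact: b0.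
Qed.

End ComplexEvaluation.

Section QuadraticFactor.
Variable R : realType.
Variable z : R[i].
Hypothesis Im_neq0 : complex.Im z != 0.
Local Open Scope complex_scope.
Local Notation g := (normsq_XsubC z).
Implicit Types (P D Lp Ld : quat {poly R}) (h : {poly R}).

Lemma quadratic_step_at j P2 D Lp Ld h :
  three_eqs (qscale (g ^+ j) P2) D Lp Ld h -> excess 1 g Lp h ->
  (exists b, qF b (qmap (cev z) P2) != 0) ->
  exists P' D' h', h = g * h' /\ three_eqs P' D' Lp Ld h'.
Proof.
move=> e ex [b Fp]; have g0 : g != 0 by exact: normsq_XsubC_neq0.
have ker := cev_eq0 Im_neq0.
have [gjh S0 K0] := qmap_isotropic g0 ker e ex.
have gh : g %| h by apply: dvdp_trans gjh; rewrite exprS dvdp_mulr.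
have [c Ed] := qE_proportional S0 K0 Fp.
have [rho erho] := cev_surj Im_neq0 (- 'i * c).
set D1 := qadd D (qscale rho (qmul P2 (qk _))).
set T := krot ('X - (complex.Re z)%:P) (- (complex.Im z)%:P).
have ED1 a : qE a (qmap (cev z) D1) = 0.
  rewrite qmap_add qmap_scale qmap_mul qmap_k qE_shear -[X in 'i * X]/(cev z rho) erho.
  by rewrite mulrA mulrN -expr2 sqr_i opprK mul1r Ed.
have EP a : qE a (qmap (cev z) (qscale (g ^+ j) P2)) = 0.
  case: j e gjh => [|j] e gjh; last first.
    suff -> : qmap (cev z) (qscale (g ^+ j.+1) P2) = qzero _ by exact: qE0.
    by apply/(qmap_eq0 ker)/qdvdp_scale; rewrite exprS dvdp_mulr.
  move: e; rewrite expr0 qscale1 => /(qmap_qktwist_eq0 ker)/(_ gh)/qktwist_EF0[]//.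
  by move=> F0; rewrite F0 eqxx in Fp.
have [P' eP'] : exists P', qmul (qscale (g ^+ j) P2) T = qscale g P'.
  by apply/qdvdpP/(qmap_eq0 ker); rewrite qmap_mul cev_krot; apply: qmul_qE0.
have [D' eD'] : exists D', qmul D1 T = qscale g D'.
  by apply/qdvdpP/(qmap_eq0 ker); rewrite qmap_mul cev_krot; apply: qmul_qE0.
exists P', D', (h %/ g); split; first by rewrite mulrC divpK.
apply: (three_eqs_cancel g0); rewrite -eP' -eD' -mulrA (mulrC g (h %/ g)) divpK //.
by have := three_eqs_krot ('X - (complex.Re z)%:P) (- (complex.Im z)%:P)
  (three_eqs_shear rho e); rewrite sqrrN.
Qed.

End QuadraticFactor.

Lemma quadratic_step (R : realType) (z : R[i]) P D Lp Ld h :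
  complex.Im z != 0 -> h != 0 -> Lp <> qzero _ ->
  three_eqs P D Lp Ld h -> excess 1 (normsq_XsubC z) Lp h ->
  exists P' D' h', h = normsq_XsubC z * h' /\ three_eqs P' D' Lp Ld h'.
Proof.
move=> Im0 h0 Lp0 e ex; have sg : (1 < size (normsq_XsubC z))%N.
  by rewrite size_normsq_XsubC.
have [j [P2 [eP nP2]]] := quat_pow_factor sg (three_eqs_neq0 h0 Lp0 e).
rewrite {}eP in e.
have p0 : qmap (cev z) P2 <> qzero _ by move/(qmap_eq0 (cev_eq0 Im0)); apply/negP.
have [[b Eb]|FP] := quat_EF_neq0 p0; last exact: quadratic_step_at e ex FP.
(* Otherwise the second row is nonzero at the conjugate root. *)
have Im0' : complex.Im z^*%C != 0.
  by case: z Im0 {e ex sg nP2 p0 Eb} => a b' /=; rewrite oppr_eq0.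
rewrite -normsq_XsubC_conj in e ex *.
apply: (quadratic_step_at Im0' e ex); exists b.
by rewrite qmap_cev_conj qF_conj conjc_eq0.
Qed.

Section Normalization.
Variable R : realType.
Implicit Types (a b g h x : {poly R}) (Lp : quat {poly R}).

Lemma mgcd_eqp a b : mgcd a b %= gcdp a b.
Proof.
rewrite /mgcd; have [->|g0] := eqVneq (gcdp a b) 0; first by rewrite scaler0 eqpxx.
by rewrite eqp_scale // invr_eq0 lead_coef_eq0.
Qed.

Lemma dvdp_mgcd x a b : (x %| mgcd a b) = (x %| a) && (x %| b).
Proof. by rewrite (eqp_dvdr _ (mgcd_eqp a b)) dvdp_gcd. Qed.

Lemma dvdp_mgcdr a b : mgcd a b %| b.
Proof. by rewrite (eqp_dvdl _ (mgcd_eqp a b)) dvdp_gcdr. Qed.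

Lemma dvdp_rgcd x Lp : qdvdp x Lp -> x %| rgcd Lp.
Proof. by case/and5P => d0 d1 d2 d3 _; rewrite /rgcd !dvdp_mgcd d0 d1 d2 d3. Qed.

Lemma excess_gcd g Lp h : g ^+ 2 %| h %/ mgcd (rgcd Lp) h -> excess 2 g Lp h.
Proof.
move=> gq; set G := mgcd (rgcd Lp) h in gq.
have hE : h = h %/ G * G by rewrite divpK // dvdp_mgcdr.
elim=> [|n IH] qd; first by rewrite hE add0n; apply: dvdp_mulr.
have gn : g ^+ n.+1 %| G.
  rewrite dvdp_mgcd dvdp_rgcd //=.
  have /IH : qdvdp (g ^+ n) Lp by apply: qdvdp_trans qd; apply: dvdp_exp2l.
  by apply: dvdp_trans; apply: dvdp_exp2l; rewrite addn2.
by rewrite hE addnC exprD dvdp_mul.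
Qed.

End Normalization.

Lemma size2_scale_XsubC (R : fieldType) (f : {poly R}) :
  size f = 2 -> exists r c, c != 0 /\ f = c *: ('X - r%:P).
Proof.
move=> sf; have c0 : lead_coef f != 0 by rewrite lead_coef_eq0 -size_poly_gt0 sf.
exists (- f`_0 / lead_coef f), (lead_coef f); split=> //.
apply/polyP => -[|[|i]]; rewrite coefZ coefB coefX coefC /=.
- by rewrite sub0r mulNr opprK mulrC divfK.
- by rewrite subr0 mulr1 lead_coefE sf.
- by rewrite subr0 mulr0 nth_default // sf.
Qed.

Lemma irreducible_quadratic (R : rcfType) (f : {poly R}) :
  size f = 3 -> irreducible_poly f ->
  exists z c, [/\ complex.Im z != 0, c != 0 & f = c *: normsq_XsubC z].
Proof.
move=> sf irr.
have [z rz] : exists z, root (map_poly (real_complex R) f) z.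
  by apply/closed_rootP; rewrite size_map_poly sf.
have Im0 : complex.Im z != 0.
  apply/negP => /eqP Im0; move: rz; have -> : z = (complex.Re z)%:C%C.
    by case: z Im0 => a b /= ->.
  rewrite fmorph_root -dvdp_XsubCl => /(irr.2 _); rewrite size_XsubC => /(_ isT).
  by move/eqp_size; rewrite size_XsubC sf.
have gf : normsq_XsubC z %| f by rewrite -(cev_eq0 Im0).
have : normsq_XsubC z %= f by rewrite -dvdp_size_eqp // size_normsq_XsubC sf.
move/eqp_eq => e; have g0 : lead_coef (normsq_XsubC z) != 0.
  by rewrite lead_coef_eq0 normsq_XsubC_neq0.
exists z, (lead_coef f / lead_coef (normsq_XsubC z)); split=> //.
  by rewrite mulf_neq0 ?invr_eq0 // lead_coef_eq0 -size_poly_gt0 sf.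
by rewrite mulrC -scalerA e scalerA mulVf ?scale1r.
Qed.

Section Conclusion.
Variable R : realType.
Implicit Types (P D Lp Ld : quat {poly R}) (f g h : {poly R}).

Lemma three_eqs_divp_sqr c f g P D Lp Ld h h' :
  c != 0 -> f = c *: g -> h = g ^+ 2 * h' -> h != 0 -> Lp <> qzero _ ->
  three_eqs P D Lp Ld h' ->
  exists P' D', motion_poly P' D' /\ three_eqs P' D' Lp Ld (h %/ f ^+ 2).
Proof.
move=> c0 fE hE h0 Lp0 e; have g0 : g != 0.
  by apply: contraNneq h0 => g0; rewrite hE g0 expr0n mul0r.
have hf : h %/ f ^+ 2 = (c^-1)%:P * (c^-1)%:P * h'.
  rewrite fE exprZn divpZr ?expf_neq0 // hE mulKp ?expf_neq0 //.
  by rewrite -polyCM mul_polyC -expr2 exprVn.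
have e' := three_eqs_scale (c^-1)%:P e; rewrite -hf in e'.
exists (qscale (c^-1)%:P P), (qscale (c^-1)%:P D); split=> //.
apply: three_eqs_motion e' => //; rewrite hf !mulf_neq0 ?polyC_eq0 ?invr_eq0 //.
by apply: contraNneq h0 => h'0; rewrite hE h'0 mulr0.
Qed.

Lemma linear_factor f P D Lp Ld h : size f = 2 ->
  h != 0 -> Lp <> qzero _ -> three_eqs P D Lp Ld h ->
  f ^+ 2 %| h %/ mgcd (rgcd Lp) h ->
  exists P' D', motion_poly P' D' /\ three_eqs P' D' Lp Ld (h %/ f ^+ 2).
Proof.
move=> sf h0 Lp0 e fq; have [r [c [c0 fE]]] := size2_scale_XsubC sf.
have ex : excess 2 ('X - r%:P) Lp h.
  by apply: excess_gcd; apply: dvdp_trans fq; rewrite dvdp_exp2r // fE dvdpZr.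
have [P1 [D1 [h1 [hE e1]]]] := linear_step h0 Lp0 e ex.
exact: three_eqs_divp_sqr c0 fE hE h0 Lp0 e1.
Qed.

Lemma quadratic_factor f P D Lp Ld h : size f = 3 -> irreducible_poly f ->
  h != 0 -> Lp <> qzero _ -> three_eqs P D Lp Ld h ->
  f ^+ 2 %| h %/ mgcd (rgcd Lp) h ->
  exists P' D', motion_poly P' D' /\ three_eqs P' D' Lp Ld (h %/ f ^+ 2).
Proof.
move=> sf irr h0 Lp0 e fq; have [z [c [Im0 c0 fE]]] := irreducible_quadratic sf irr.
set g := normsq_XsubC z in fE; have g0 : g != 0 by exact: normsq_XsubC_neq0.
have ex : excess 2 g Lp h.
  by apply: excess_gcd; apply: dvdp_trans fq; rewrite dvdp_exp2r // fE dvdpZr.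
have [P1 [D1 [h1 [hE1 e1]]]] := quadratic_step Im0 h0 Lp0 e (excess_le (leqnSn 1) ex).
have h10 : h1 != 0 by apply: contraNneq h0 => h10; rewrite hE1 h10 mulr0.
rewrite hE1 in ex; have [P2 [D2 [h2 [hE2 e2]]]] :=
  quadratic_step Im0 h10 Lp0 e1 (excess_mull g0 ex).
apply: three_eqs_divp_sqr c0 fE _ h0 Lp0 e2.
by rewrite hE1 hE2 mulrA -expr2.
Qed.

End Conclusion.

Theorem lemma8 (R : realType) (Lp Ld : quat {poly R}) (h f : {poly R})
  (P D : quat {poly R}) :
  line_poly Lp Ld ->
  h != 0 ->
  motion_poly P D ->
  three_eqs P D Lp Ld h ->
  (size f = 2%N \/ (size f = 3%N /\ irreducible_poly f)) ->
  f ^+ 2 %| h %/ mgcd (rgcd Lp) h ->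
  exists m : nat, (1 <= m)%N /\ f ^+ (2 * m) %| h /\
    exists P' D' : quat {poly R},
      motion_poly P' D' /\ three_eqs P' D' Lp Ld (h %/ f ^+ (2 * m)).
Proof.
move=> [_ _ _ Lp0] h0 _ e sf fq; exists 1%N; rewrite muln1; split=> //; split.
  by apply: dvdp_trans fq _; rewrite divp_dvd // dvdp_mgcdr.
case: sf => [sf|[sf irr]].
- exact: linear_factor sf h0 Lp0 e fq.
- exact: quadratic_factor sf irr h0 Lp0 e fq.
Qed.
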